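(* Let $c>0$, $\delta\ge1$, $\varepsilon\in(0,1-\frac1c)$, and let $\rho$ be a probability measure on $\mathbb R$ with $\int\log(1+s^2)\rho(\mathrm ds)<+\infty$. Then there exists $T_{\varepsilon,\rho}>0$ such that for every $T>T_{\varepsilon,\rho}$ there are constants $C_{T,\delta}>0$ (depending only on $T,\delta$) and $M_{T,\rho}\in(\varepsilon+\frac1c,1)$ (depending only on $T,\rho$), not depending on $x$, such that for all $x\in\mathbb R$, $$\exp\Big(-c\int_{\mathbb R}\tfrac12\log\big(\delta^2+(x-s)^2\big)\rho(\mathrm ds)\Big)\le (C_{T,\delta})^{cM_{T,\rho}}(x^2+\delta^2)^{-cM_{T,\rho}/2}.$$ *)

From HB Require Import structures.
From mathcomp Require Import all_boot all_order all_algebra.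
From mathcomp Require Import all_classical all_reals all_analysis.

(* Peetre's inequality x^2 + delta^2 <= 2 (delta^2 + (x - s)^2) (1 + s^2), after taking logarithms
   and integrating against rho, gives
     \int 1/2 log (delta^2 + (x - s)^2) rho(ds) >= 1/2 (log (x^2 + delta^2) - log 2 - m),
   with m the (finite) log-moment of rho.  With M_T = T / (T + 1) and C_T = exp (T (T + 1) / 2)
   the right-hand side of the claim is exp (c (T^2 - M_T log (x^2 + delta^2)) / 2), which beats
   exp (c (log 2 + m - log (x^2 + delta^2)) / 2) once T^2 >= log 2 + m, since M_T <= 1 and
   log (x^2 + delta^2) >= 0; and M_T > eps + 1/c once T + 1 > 1 / (1 - eps - 1/c). *)

From HB Require Import structures.
From mathcomp Require Import all_boot all_order all_algebra.
From mathcomp Require Import all_classical all_reals all_analysis.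
From mathcomp Require Import measurable_realfun ring lra.
Set Implicit Arguments.
Unset Strict Implicit.

Import Order.TTheory GRing.Theory Num.Theory.
Local Open Scope ring_scope.
Local Open Scope classical_set_scope.

Lemma sqr_add_le_shift (R : realFieldType) (delta x s : R) : 1 <= delta ^+ 2 ->
  x ^+ 2 + delta ^+ 2 <= 2 * ((delta ^+ 2 + (x - s) ^+ 2) * (1 + s ^+ 2)).
Proof.
move=> hd.
have := sqr_ge0 (x - 2 * s).
have : 0 <= (delta ^+ 2 - 1) * s ^+ 2 by rewrite mulr_ge0 ?sqr_ge0 ?subr_ge0.
have := mulr_ge0 (sqr_ge0 s) (sqr_ge0 (x - s)).
nra.
Qed.

Lemma ln_add_sqr_ge0 (R : realType) (a y : R) : 1 <= a -> 0 <= ln (a + y ^+ 2).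
Proof. by move=> a1; rewrite ln_ge0 // -[1]addr0 lerD ?sqr_ge0. Qed.

Lemma ln_sqr_add_le_shift (R : realType) (delta x s : R) : 1 <= delta ^+ 2 ->
  ln (x ^+ 2 + delta ^+ 2) <=
  ln 2 + ln (delta ^+ 2 + (x - s) ^+ 2) + ln (1 + s ^+ 2).
Proof.
move=> hd.
have pos (a y : R) : 0 < a -> 0 < a + y ^+ 2 by move=> a0; rewrite ltr_wpDr ?sqr_ge0.
have d0 : 0 < delta ^+ 2 by rewrite (lt_le_trans ltr01).
have px : 0 < x ^+ 2 + delta ^+ 2 by rewrite addrC pos.
have pxs := pos _ (x - s) d0; have ps := pos _ s ltr01.
rewrite -!lnM ?posrE ?mulr_gt0 // ler_ln ?posrE ?mulr_gt0 //.
by rewrite -mulrA sqr_add_le_shift.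
Qed.

Lemma measurable_ln_add_sqr d (T : measurableType d) (R : realType)
    (a : R) (g : T -> R) :
  measurable_fun setT g -> measurable_fun setT (fun t => ln (a + g t ^+ 2)).
Proof.
move=> mg; apply: (measurableT_comp (@measurable_ln R)).
by apply: measurable_funD; [exact: measurable_cst | exact: measurable_funX].
Qed.

Lemma probability_cst_le_integral d (T : measurableType d) (R : realType)
    (P : probability T R) (f : T -> \bar R) (k : R) :
  measurable_fun setT f -> (forall t, (0 <= f t)%E) -> (forall t, (k%:E <= f t)%E) ->
  (k%:E <= \int[P]_(t in setT) f t)%E.
Proof.
move=> mf f0 kf; have [k0|k0] := leP k 0.
  by apply: le_trans (integral_ge0 _ (fun t _ => f0 t)); rewrite lee_fin.
rewrite -[k%:E]mule1 -(probability_setT P) -integral_cst //.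
by apply: ge0_le_integral => // t _; rewrite lee_fin ltW.
Qed.

Lemma expeR_Nmul_le (R : realType) (c a : R) (I : \bar R) : 0 <= c ->
  (a%:E <= I)%E -> (expeR (- c%:E * I) <= (expR (- (c * a)))%:E)%E.
Proof.
move=> c0 aI; rewrite -[(expR _)%:E]/(expeR (- (c * a))%:E) lee_expeR EFinN.
by rewrite mulNe EFinM leeN2 lee_wpmul2l.
Qed.

Section decay.
Variable R : realType.

Definition decay_constant (T : R) : R := expR (T * (T + 1) / 2).

Definition decay_exponent (T : R) : R := T / (T + 1).

Lemma decay_exponentE (T : R) : T + 1 != 0 ->
  decay_exponent T = 1 - (T + 1)^-1.
Proof. by move=> T1; rewrite /decay_exponent; field. Qed.

Lemma decay_exponent_gt (a T : R) : 0 < a -> a^-1 < T + 1 ->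
  1 - a < decay_exponent T.
Proof.
move=> a0 aT; have T1 : 0 < T + 1 by rewrite (lt_trans _ aT) ?invr_gt0.
rewrite decay_exponentE ?gt_eqF // ltrD2l ltrN2 -[a]invrK ltf_pV2 ?posrE ?invr_gt0 //.
Qed.

Lemma decay_exponent_bounds (T : R) : 0 < T ->
  0 <= decay_exponent T < 1.
Proof.
move=> T0; rewrite divr_ge0 ?ltW ?ltr_pdivrMr ?addr_gt0 //; lra.
Qed.

Lemma decay_bound (c T X : R) : 0 < T -> 0 < X ->
  decay_constant T `^ (c * decay_exponent T)
    * X `^ (- (c * decay_exponent T) / 2)
  = expR (c * (T ^+ 2 - decay_exponent T * ln X) / 2).
Proof.
move=> T0 X0; rewrite /powR !gt_eqF ?expR_gt0 // expRK -expRD; congr expR.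
rewrite /decay_constant /decay_exponent; field; lra.
Qed.

End decay.

Section log_potential.
Variables (R : realType) (rho : probability R R).

Let half_ln_ge0 (a y : R) : 1 <= a -> (0 <= (2^-1 * ln (a + y ^+ 2))%:E)%E.
Proof. by move=> a1; rewrite lee_fin mulr_ge0 ?ln_add_sqr_ge0. Qed.

Let measurable_half_ln (a : R) {g : R -> R} : measurable_fun setT g ->
  measurable_fun setT (fun s => (2^-1 * ln (a + g s ^+ 2))%:E).
Proof.
move=> mg; apply/measurable_EFinP/measurable_funM; first exact: measurable_cst.
exact: measurable_ln_add_sqr.
Qed.

Lemma log_potential_ge (delta x m : R) : 1 <= delta ^+ 2 ->
  (\int[rho]_(s in setT) (ln (1 + s ^+ 2))%:E <= m%:E)%E ->
  ((2^-1 * (ln (x ^+ 2 + delta ^+ 2) - ln 2 - m))%:E <=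
   \int[rho]_(s in setT) (2^-1 * ln (delta ^+ 2 + (x - s) ^+ 2))%:E)%E.
Proof.
move=> hd hm.
have hmom : (\int[rho]_(s in setT) (2^-1 * ln (1 + s ^+ 2))%:E
             <= (2^-1 * m)%:E)%E.
  rewrite (eq_integral (fun s : R => 2^-1%:E * (ln (1 + s ^+ 2))%:E)%E); last first.
    by move=> s _; rewrite EFinM.
  rewrite ge0_integralZl_EFin ?EFinM ?lee_wpmul2l //.
  - by move=> s _; rewrite lee_fin ln_add_sqr_ge0.
  - exact/measurable_EFinP/measurable_ln_add_sqr/measurable_id.
have mshift : measurable_fun setT (fun s : R => x - s).
  by apply: measurable_funB; [exact: measurable_cst | exact: measurable_id].
have mI := measurable_half_ln (delta ^+ 2) mshift.
have mJ := measurable_half_ln 1 (@measurable_id _ R setT).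
rewrite mulrBr EFinB leeBlDr // (le_trans _ (leeD2l _ hmom)) //.
rewrite -ge0_integralD // => [|s _|s _]; [|exact: half_ln_ge0..].
apply: probability_cst_le_integral => [|s|s]; first exact: emeasurable_funD.
  by rewrite adde_ge0 ?half_ln_ge0.
rewrite -EFinD lee_fin -mulrDr ler_wpM2l //.
by have := ln_sqr_add_le_shift x s hd; lra.
Qed.

Lemma log_potential_decay (c delta x m T : R) :
    0 < c -> 1 <= delta ^+ 2 ->
    (\int[rho]_(s in setT) (ln (1 + s ^+ 2))%:E <= m%:E)%E ->
    0 < T -> ln 2 + m <= T ^+ 2 ->
  (expeR (- c%:E *
      \int[rho]_(s in setT) ((2^-1 * ln (delta ^+ 2 + (x - s) ^+ 2))%:E))
   <= (decay_constant T `^ (c * decay_exponent T)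
        * (x ^+ 2 + delta ^+ 2) `^ (- (c * decay_exponent T) / 2))%:E)%E.
Proof.
move=> c0 hd hm T0 hT.
have X0 : 0 < x ^+ 2 + delta ^+ 2.
  by rewrite addrC ltr_wpDr ?sqr_ge0 ?(lt_le_trans ltr01 hd).
rewrite decay_bound //.
apply: le_trans (expeR_Nmul_le (ltW c0) (log_potential_ge x hd hm)) _.
rewrite lee_fin ler_expR.
have /andP[M0 M1] := decay_exponent_bounds T0.
have L0 : 0 <= ln (x ^+ 2 + delta ^+ 2) by rewrite addrC ln_add_sqr_ge0.
set L := ln _ in L0 *; set M := decay_exponent T in M0 M1 *.
have key : ln 2 + m - L <= T ^+ 2 - M * L by nra.
have := ler_wpM2l (ltW c0) key; lra.
Qed.

End log_potential.

Theorem lemma3p10 (R : realType) :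
  exists (Cf : R -> R -> R) (Mf : R -> probability R R -> R),
  forall (c delta eps : R) (rho : probability R R),
    0 < c -> 1 <= delta -> 0 < eps -> eps < 1 - c^-1 ->
    (\int[rho]_(s in setT) (ln (1 + s ^+ 2))%:E < +oo)%E ->
    exists T0 : R, 0 < T0 /\
    forall T : R, T0 < T ->
      0 < Cf T delta /\ eps + c^-1 < Mf T rho /\ Mf T rho < 1 /\
      forall x : R,
        (expeR (- c%:E *
            \int[rho]_(s in setT) ((2^-1 * ln (delta ^+ 2 + (x - s) ^+ 2))%:E))
         <= ((Cf T delta) `^ (c * Mf T rho)
              * (x ^+ 2 + delta ^+ 2) `^ (- (c * Mf T rho) / 2))%:E)%E.
Proof.
exists (fun T _ => decay_constant T), (fun T _ => decay_exponent T).
move=> c delta eps rho c0 delta1 _ epsc hmom.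
have hd : 1 <= delta ^+ 2 by exact: exprn_ege1.
have mom0 : (0 <= \int[rho]_(s in setT) (ln (1 + s ^+ 2))%:E)%E.
  by apply: integral_ge0 => s _; rewrite lee_fin ln_add_sqr_ge0.
rewrite -ge0_fin_numE // in hmom; have momE := fineK hmom.
set m := fine _ in momE.
have m0 : 0 <= m by rewrite -lee_fin momE.
have ln2 : 0 <= ln (2 : R) by rewrite ln_ge0 // ler1n.
set gap := 1 - eps - c^-1.
have gap0 : 0 < gap by rewrite /gap; lra.
have gapV : 0 < gap^-1 by rewrite invr_gt0.
exists (1 + ln 2 + m + gap^-1); split => [|T hT]; first lra.
have T0 : 0 < T by lra.
split; first exact: expR_gt0.
split.
  have gapT : gap^-1 < T + 1 by lra.
  by have := decay_exponent_gt gap0 gapT; rewrite /gap; lra.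
split; first by case/andP: (decay_exponent_bounds T0).
have T2 : ln 2 + m <= T ^+ 2 by nra.
have mle : (\int[rho]_(s in setT) (ln (1 + s ^+ 2))%:E <= m%:E)%E by rewrite momE.
by move=> x; apply: log_potential_decay c0 hd mle T0 T2.
Qed.
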